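(* Let $\mathbb{F}$ be a field, $n\in\mathbb{N}$, $W$ a linear subspace of $\mathbb{F}^n$ and $v\in\mathbb{F}^n$. Then $(M(W)/^\bullet v)^*=M(W)^*\setminus^{\bullet} v$, that is, the dual of the matroid $M(W\cap\mathrm{span}(v)^\perp)$ equals $M(\mathrm{span}(W^\perp\cup\{v\}))$.
   Context: For $x,y\in\mathbb{F}^n$, $x\cdot y=\sum_i x_iy_i$, and for a subspace $U$, $U^\perp=\{x: x\cdot u=0\ \forall u\in U\}$. For a subspace $W\subseteq\mathbb{F}^n$, $M(W)$ is the matroid on ground set $\{1,\dots,n\}$ defined as the column matroid of a matrix whose rows form a basis of $W$ (a set of indices is independent iff the corresponding columns are linearly independent; this does not depend on the basis chosen). Contraction$^\bullet$: $M(W)/^\bullet v:=M(W\cap\mathrm{span}(v)^\perp)$. Deletion$^\bullet$: $M(W)\setminus^\bullet v:=M(\mathrm{span}(W\cup\{v\}))$, and $M(W)^*\setminus^\bullet v$ means $M(W^\perp)\setminus^\bullet v$. $M^*$ denotes the dual matroid (independent sets: sets disjoint from some basis of $M$). *)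

From HB Require Import structures.
From mathcomp Require Import all_boot all_order all_algebra.
Set Implicit Arguments. Unset Strict Implicit. Unset Printing Implicit Defensive.
Import Order.TTheory GRing.Theory.
Local Open Scope ring_scope.

(* Subspaces of F^n are represented by matrices (their row spaces), as in mxalgebra. *)

Definition cols_indep (F : fieldType) (k n : nat) (B : 'M[F]_(k, n))
    (S : {set 'I_n}) : Prop :=
  forall c : 'I_n -> F,
    \sum_(j in S) c j *: col j B = 0 -> forall j, j \in S -> c j = 0.

(* A matroid on ground set 'I_n, given by its independence predicate. *)
Definition matroid (n : nat) := {set 'I_n} -> Prop.

(* M(W): column matroid of a matrix whose rows form a basis of W (row_base W). *)
Definition M_of (F : fieldType) (m n : nat) (W : 'M[F]_(m, n)) : matroid n :=
  fun S => cols_indep (row_base W) S.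

Definition is_basis (n : nat) (M : matroid n) (B : {set 'I_n}) : Prop :=
  M B /\ forall S, M S -> B \subset S -> S = B.

Definition dual (n : nat) (M : matroid n) : matroid n :=
  fun S => exists B, is_basis M B /\ [disjoint S & B].

Definition matroid_eq (n : nat) (M1 M2 : matroid n) : Prop :=
  forall S, M1 S <-> M2 S.

(* U^perp = {x | x . u = 0 for all u in U}, as the kernel of U^T. *)
Definition perp (F : fieldType) (m n : nat) (U : 'M[F]_(m, n)) : 'M[F]_n :=
  kermx U^T.

Definition contr (F : fieldType) (m n : nat) (W : 'M[F]_(m, n)) (v : 'rV[F]_n)
  : matroid n := M_of (W :&: perp v)%MS.

Definition del (F : fieldType) (m n : nat) (W : 'M[F]_(m, n)) (v : 'rV[F]_n)
  : matroid n := M_of (W + v)%MS.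

(* Write E_S for the coordinate subspace of F^n spanned by the unit vectors
   indexed by S.  The columns of a basis matrix of U indexed by S are
   independent iff no nonzero vector of V := U^perp is supported in S, i.e. iff
   V ∩ E_S = 0.  In this matroid B is a basis iff V ∩ E_B = 0 and
   V + E_B = F^n.  If S is disjoint from such a B, then
   V^perp ∩ E_S ⊆ V^perp ∩ E_B^perp = (V + E_B)^perp = 0.  Conversely, if
   V^perp ∩ E_S = 0 then V + E_(~S) = F^n, and a maximal independent subset
   of ~S is a basis.  Hence M(U)^* = M(U^perp), and the theorem follows from
   (W ∩ v^perp)^perp = W^perp + span v. *)

From HB Require Import structures.
From mathcomp Require Import all_boot all_order all_algebra.
From Stdlib Require Import Setoid.
Set Implicit Arguments. Unset Strict Implicit. Unset Printing Implicit Defensive.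
Import GRing.Theory.
Local Open Scope ring_scope.

Section MatroidEq.
Variables (n : nat) (M1 M2 : matroid n).
Hypothesis eqM : matroid_eq M1 M2.

Lemma is_basis_eq B : is_basis M1 B -> is_basis M2 B.
Proof. by move=> [/eqM indB maxB]; split=> // S /eqM; apply: maxB. Qed.

End MatroidEq.

Lemma matroid_eq_sym n (M1 M2 : matroid n) : matroid_eq M1 M2 -> matroid_eq M2 M1.
Proof. by move=> eqM S; split=> /eqM. Qed.

Lemma dual_eq n (M1 M2 : matroid n) :
  matroid_eq M1 M2 -> matroid_eq (dual M1) (dual M2).
Proof.
move=> eqM S; split=> [[B [/(is_basis_eq eqM) baseB dSB]] | [B [baseB dSB]]].
  by exists B.
by exists B; split=> //; apply: is_basis_eq baseB; apply: matroid_eq_sym.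
Qed.

Section ColumnMatroids.
Variables (F : fieldType) (n : nat).
Implicit Types (S B : {set 'I_n}) (x : 'rV[F]_n).

Lemma eqmx_of_sub m1 m2 (A : 'M[F]_(m1, n)) (B : 'M[F]_(m2, n)) :
  (forall p (X : 'M[F]_(p, n)), (X <= A)%MS = (X <= B)%MS) -> (A :=: B)%MS.
Proof. by move=> AB; apply/eqmxP; rewrite -AB submx_refl AB submx_refl. Qed.

Lemma sub_perp_sym p q (A : 'M[F]_(p, n)) (B : 'M[F]_(q, n)) :
  (A <= perp B)%MS = (B <= perp A)%MS.
Proof. by rewrite !sub_kermx -trmx_eq0 trmx_mul trmxK. Qed.

Lemma mxrank_perp p (A : 'M[F]_(p, n)) : \rank (perp A) = (n - \rank A)%N.
Proof. by rewrite mxrank_ker mxrank_tr. Qed.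

Lemma perp_eq0 p (A : 'M[F]_(p, n)) : (perp A == 0) = row_full A.
Proof.
by rewrite -mxrank_eq0 mxrank_perp subn_eq0 /row_full eqn_leq rank_leq_col.
Qed.

Lemma perpK p (A : 'M[F]_(p, n)) : (perp (perp A) :=: A)%MS.
Proof.
have subA : (A <= perp (perp A))%MS by rewrite sub_perp_sym.
apply: eqmx_sym; apply/eqmxP; rewrite subA /= -(mxrank_leqif_sup subA).
by rewrite !mxrank_perp subKn ?rank_leq_col.
Qed.

Lemma eqmx_perp p q (A : 'M[F]_(p, n)) (B : 'M[F]_(q, n)) :
  (A :=: B)%MS -> (perp A :=: perp B)%MS.
Proof. by move=> eqAB; apply: eqmx_of_sub => r X; rewrite !(sub_perp_sym X) eqAB. Qed.

Lemma perp_adds p q (A : 'M[F]_(p, n)) (B : 'M[F]_(q, n)) :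
  (perp (A + B)%MS :=: perp A :&: perp B)%MS.
Proof.
apply: eqmx_of_sub => r X.
by rewrite sub_capmx !(sub_perp_sym X) addsmx_sub.
Qed.

Lemma perp_cap p q (A : 'M[F]_(p, n)) (B : 'M[F]_(q, n)) :
  (perp (A :&: B)%MS :=: perp A + perp B)%MS.
Proof.
apply: (eqmx_trans _ (perpK (perp A + perp B)%MS)); apply: eqmx_perp.
apply: (eqmx_trans _ (eqmx_sym (perp_adds _ _))).
exact: eqmx_sym (cap_eqmx (perpK A) (perpK B)).
Qed.

Definition coordmx S : 'M[F]_n := diag_mx (\row_j (j \in S)%:R).

Lemma mul_coordmxE p (A : 'M[F]_(p, n)) S i j :
  (A *m coordmx S) i j = A i j * (j \in S)%:R.
Proof. by rewrite mul_mx_diag !mxE. Qed.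

Lemma coordmx_idem S : coordmx S *m coordmx S = coordmx S.
Proof.
rewrite mulmx_diag; congr diag_mx; apply/rowP => j; rewrite !mxE.
by case: (j \in S); rewrite ?mulr1 ?mulr0.
Qed.

Lemma sub_coordmxE p (A : 'M[F]_(p, n)) S :
  (A <= coordmx S)%MS = (A *m coordmx S == A).
Proof.
apply/idP/eqP => [/submxP[D ->] | <-]; last exact: submxMl.
by rewrite -mulmxA coordmx_idem.
Qed.

Lemma sub_coordmxP x S :
  reflect (forall j, j \notin S -> x 0 j = 0) (x <= coordmx S)%MS.
Proof.
rewrite sub_coordmxE; apply: (iffP eqP) => [xS j jS | x0].
  by rewrite -xS mul_coordmxE (negbTE jS) mulr0.
apply/rowP => j; rewrite mul_coordmxE.
by case: (boolP (j \in S)) => jS; rewrite ?mulr1 // x0 ?mul0r.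
Qed.

Lemma delta_sub_coordmx S j : (('e_j : 'rV[F]_n) <= coordmx S)%MS = (j \in S).
Proof.
apply/sub_coordmxP/idP => [e0 | jS k kS]; last first.
  by rewrite mxE eqxx; case: eqP kS => // ->; rewrite jS.
by apply: contraT => /e0/eqP; rewrite mxE !eqxx oner_eq0.
Qed.

Lemma coordmx_subP p (A : 'M[F]_(p, n)) S :
  reflect (forall j, j \in S -> (('e_j : 'rV[F]_n) <= A)%MS) (coordmx S <= A)%MS.
Proof.
apply: (iffP idP) => [SA j jS | eA].
  by apply: submx_trans SA; rewrite delta_sub_coordmx.
apply/row_subP => j; rewrite row_diag_mx mxE.
by case: (boolP (j \in S)) => jS; rewrite ?scale1r ?eA // scale0r sub0mx.
Qed.

Lemma coordmxS S1 S2 : S1 \subset S2 -> (coordmx S1 <= coordmx S2)%MS.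
Proof.
by move=> /subsetP S12; apply/coordmx_subP => j /S12; rewrite delta_sub_coordmx.
Qed.

Lemma perp_coordmx S : (perp (coordmx S) :=: coordmx (~: S))%MS.
Proof.
apply: eqmx_of_sub => p X.
rewrite /perp sub_kermx tr_diag_mx -/(coordmx S) sub_coordmxE.
apply/eqP/eqP => /matrixP XS; apply/matrixP => i j; move: (XS i j);
  rewrite !mul_coordmxE !mxE inE;
  by case: (j \in S); rewrite ?mulr1 ?mulr0 // => ->.
Qed.

Lemma perp_adds_coordmx p (A : 'M[F]_(p, n)) S :
  (perp (A + coordmx S)%MS :=: perp A :&: coordmx (~: S))%MS.
Proof. exact: eqmx_trans (perp_adds _ _) (cap_eqmx (eqmx_refl _) (perp_coordmx S)). Qed.

Definition supp_free p (V : 'M[F]_(p, n)) S := (V :&: coordmx S)%MS == 0.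

Definition supp_matroid p (V : 'M[F]_(p, n)) : matroid n := fun S => supp_free V S.

Section SuppMatroid.
Variables (p : nat) (V : 'M[F]_(p, n)).

Lemma supp_free0 : supp_free V set0.
Proof.
apply/rowV0P => x; rewrite sub_capmx => /andP[_ /sub_coordmxP x0].
by apply/rowP => j; rewrite x0 ?inE ?mxE.
Qed.

Lemma delta_sub_adds_coordmx B j :
  supp_free V B -> (supp_free V (j |: B) -> j \in B) ->
  (('e_j : 'rV[F]_n) <= V + coordmx B)%MS.
Proof.
move=> indB maxB; case: (boolP (supp_free V (j |: B))) => [/maxB jB | depB].
  by apply: submx_trans (addsmxSr _ _); rewrite delta_sub_coordmx.
have [x] := rowV0Pn depB; rewrite sub_capmx => /andP[xV /sub_coordmxP xjB] x_neq0.
have xB_j (k : 'I_n) : k \notin B -> k != j -> x 0 k = 0.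
  by move=> kB kj; rewrite xjB // in_setU1 negb_or kj.
have xj_neq0 : x 0 j != 0.
  apply: contra x_neq0 => /eqP xj0; apply/eqP/(rowV0P indB); rewrite sub_capmx xV.
  by apply/sub_coordmxP => k kB; case: (eqVneq k j) => [-> | /(xB_j k kB)].
pose y := x - x 0 j *: 'e_j.
have yB : (y <= coordmx B)%MS.
  apply/sub_coordmxP => k kB; rewrite !mxE eqxx /=.
  by case: (eqVneq k j) => [-> | /(xB_j k kB) ->]; rewrite ?mulr1 ?subrr ?mulr0 ?subr0.
have -> : 'e_j = (x 0 j)^-1 *: (x - y) by rewrite subKr scalerA mulVf ?scale1r.
by apply/scalemx_sub/addmx_sub_adds; rewrite ?eqmx_opp.
Qed.

Lemma delta_nsub_adds_coordmx B S j :
  supp_free V S -> B \subset S -> j \in S -> j \notin B ->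
  ~~ (('e_j : 'rV[F]_n) <= V + coordmx B)%MS.
Proof.
move=> indS sBS jS; apply: contra => /sub_addsmxP[[u w] /= ej].
have a0 : u *m V = 0.
  apply: (rowV0P indS); rewrite sub_capmx submxMl.
  have -> : u *m V = 'e_j - w *m coordmx B by rewrite ej addrK.
  rewrite addmx_sub ?eqmx_opp ?delta_sub_coordmx //.
  exact: submx_trans (submxMl _ _) (coordmxS sBS).
by rewrite -delta_sub_coordmx ej a0 add0r submxMl.
Qed.

Lemma supp_basisP B :
  is_basis (supp_matroid V) B <-> supp_free V B /\ row_full (V + coordmx B).
Proof.
split=> [[indB maxB] | [indB fullB]].
  split=> //; rewrite -sub1mx; apply/row_subP => j; rewrite row1.
  apply: delta_sub_adds_coordmx => // indjB.
  by rewrite -(maxB _ indjB (subsetUr _ _)) setU11.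
split=> // S indS sBS; apply/eqP; rewrite eqEsubset sBS andbT.
apply/subsetP => j jS; apply: contraT => jB.
by have := delta_nsub_adds_coordmx indS sBS jS jB; rewrite submx_full.
Qed.

Lemma dual_supp_matroid :
  matroid_eq (dual (supp_matroid V)) (supp_matroid (perp V)).
Proof.
move=> S; split=> [[B [/supp_basisP[_ fullB] dSB]] | indS].
  rewrite /supp_matroid /supp_free -submx0.
  apply: (@submx_trans _ _ _ _ _ _ (perp (V + coordmx B)%MS)); last first.
    by rewrite submx0 perp_eq0.
  by rewrite perp_adds_coordmx capmxS // coordmxS // -disjoints_subset.
pose P := [pred X : {set 'I_n} | (X \subset ~: S) && supp_free V X].
have [|B /maxsetP[/andP[sBS indB] maxB]] := @ex_maxset _ P.
  by exists set0; rewrite /= sub0set supp_free0.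
exists B; split; last by rewrite disjoint_sym disjoints_subset.
apply/supp_basisP; split=> //; rewrite -sub1mx.
have fullS : row_full (V + coordmx (~: S)).
  by rewrite -perp_eq0 -submx0 perp_adds_coordmx setCK submx0.
apply: submx_trans (_ : 1%:M <= V + coordmx (~: S))%MS _; first by rewrite sub1mx.
rewrite addsmx_sub addsmxSl; apply/coordmx_subP => j jS.
apply: delta_sub_adds_coordmx => // indjB.
by rewrite -(maxB (j |: B)) ?setU11 ?subsetUr //= subUset sub1set jS sBS.
Qed.

End SuppMatroid.

Lemma supp_free_eqmx p q (A : 'M[F]_(p, n)) (B : 'M[F]_(q, n)) S :
  (A :=: B)%MS -> supp_free A S = supp_free B S.
Proof. by move=> eqAB; rewrite /supp_free -!submx0 (cap_eqmx eqAB (eqmx_refl _)). Qed.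

Lemma sub_perp_cols k (A : 'M[F]_(k, n)) x :
  (x <= perp A)%MS = (\sum_j x 0 j *: col j A == 0).
Proof.
rewrite /perp sub_kermx mulmx_sum_row -trmx_eq0 linear_sum.
congr (_ == 0); apply: eq_bigr => j _.
by rewrite /= linearZ /= -tr_col trmxK.
Qed.

Lemma sum_coordmx (V : lmodType F) x S (f : 'I_n -> V) :
  \sum_j (x *m coordmx S) 0 j *: f j = \sum_(j in S) x 0 j *: f j.
Proof.
rewrite [RHS]big_mkcond; apply: eq_bigr => j _; rewrite mul_coordmxE.
by case: (j \in S); rewrite ?mulr1 ?mulr0 ?scale0r.
Qed.

Lemma cols_indepE k (A : 'M[F]_(k, n)) S : cols_indep A S <-> supp_free (perp A) S.
Proof.
split=> [indA | /rowV0P indA c sum0 j jS].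
  apply/rowV0P => x; rewrite sub_capmx sub_perp_cols => /andP[/eqP sum0 xS].
  have xSx : x *m coordmx S = x by apply/eqP; rewrite -sub_coordmxE.
  apply/rowP => j; rewrite mxE; case: (boolP (j \in S)) => jS.
    by apply: (indA (fun j => x 0 j)) jS; rewrite -sum_coordmx xSx.
  by move/sub_coordmxP: xS; apply.
pose x := \row_j c j *m coordmx S.
have x0 : x = 0.
  apply: indA; rewrite sub_capmx submxMl andbT sub_perp_cols sum_coordmx.
  by under eq_bigr do rewrite mxE; apply/eqP.
by have := congr1 (fun y : 'rV_n => y 0 j) x0; rewrite mul_coordmxE !mxE jS mulr1.
Qed.

Lemma M_ofE m (U : 'M[F]_(m, n)) : matroid_eq (M_of U) (supp_matroid (perp U)).
Proof.
move=> S; rewrite /M_of cols_indepE /supp_matroid.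
by rewrite (supp_free_eqmx _ (eqmx_perp (eq_row_base U))).
Qed.

Lemma M_of_eqmx m1 m2 (A : 'M[F]_(m1, n)) (B : 'M[F]_(m2, n)) :
  (A :=: B)%MS -> matroid_eq (M_of A) (M_of B).
Proof.
move=> eqAB S; rewrite (M_ofE A S) (M_ofE B S) /supp_matroid.
by rewrite (supp_free_eqmx _ (eqmx_perp eqAB)).
Qed.

Lemma dual_M_of m (U : 'M[F]_(m, n)) : matroid_eq (dual (M_of U)) (M_of (perp U)).
Proof.
by move=> S; rewrite (dual_eq (M_ofE U) S) (dual_supp_matroid _ S) (M_ofE _ S).
Qed.

End ColumnMatroids.

Theorem theorem12 (F : fieldType) (n m : nat) (W : 'M[F]_(m, n)) (v : 'rV[F]_n) :
  matroid_eq (dual (contr W v)) (del (perp W) v).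
Proof.
move=> S; rewrite /contr /del (dual_M_of _ S); apply: M_of_eqmx.
exact: eqmx_trans (perp_cap _ _) (adds_eqmx (eqmx_refl _) (perpK _)).
Qed.
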